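(* Let $X_1,\dots,X_n\in\mathbb{R}$ and $1\le k\le n$. Let $\mathcal{I}\subseteq\{1,\dots,n\}$ with $|\mathcal{I}|=k$ be any subset minimizing the sum of squared deviations $\sum_{i\in\mathcal{I}}X_i^2-\frac{1}{k}\left(\sum_{i\in\mathcal{I}}X_i\right)^2$ over all $k$-subsets, and let $\mathcal{O}=\{1,\dots,n\}\setminus\mathcal{I}$. Then $\mathcal{I}$ and $\mathcal{O}$ are quadratically separable: there exist $w\in\mathbb{R}^2\setminus\{0\}$ and $b\in\mathbb{R}$ such that $w^\top(X_i^2,X_i)\le b$ for all $i\in\mathcal{I}$ and $w^\top(X_o^2,X_o)\ge b$ for all $o\in\mathcal{O}$.
   Context: Quadratic separability means linear separability of the two point sets after lifting each real number $x$ to $\mathcal{L}_2(x)=(x^2,x)\in\mathbb{R}^2$; two point sets $A,B\subseteq\mathbb{R}^2$ are linearly separable if there are $w\in\mathbb{R}^2$ and $b\in\mathbb{R}$ with $w^\top a\ge b$ for all $a\in A$ and $w^\top p\le b$ for all $p\in B$. *)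

From mathcomp Require Import all_boot all_order all_algebra.
Set Implicit Arguments. Unset Strict Implicit. Unset Printing Implicit Defensive.
Import Order.TTheory GRing.Theory Num.Theory.
Local Open Scope ring_scope.

Definition ssd (R : realFieldType) (n k : nat) (X : 'I_n -> R) (S : {set 'I_n}) : R :=
  \sum_(i in S) X i ^+ 2 - (k%:R)^-1 * (\sum_(i in S) X i) ^+ 2.

Definition lift2_dot (R : realFieldType) (w1 w2 x : R) : R := w1 * x ^+ 2 + w2 * x.

(* Exchanging a point X_i of I for an outside point X_o changes ssd by
   f(X_o) - f(X_i) - (X_o - X_i)^2 / k, where f(x) = x^2 - 2 m x and m is the
   sum over I divided by k.  Minimality of I therefore forces f(X_i) <= f(X_o)
   for every such pair, so the level max_{i in I} f(X_i) separates the
   lifted points along the direction w = (1, -2m). *)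

From mathcomp Require Import all_boot all_order all_algebra.
From mathcomp Require Import ring lra.
Set Implicit Arguments. Unset Strict Implicit. Unset Printing Implicit Defensive.
Import Order.TTheory GRing.Theory Num.Theory.
Local Open Scope ring_scope.

Lemma set_separated_by_max (T : finType) (d : Order.disp_t) (O : orderType d)
    (A : {set T}) (g : T -> O) :
  A != set0 -> {in A & ~: A, forall a b, (g a <= g b)%O} ->
  exists c, {in A, forall a, (g a <= c)%O} /\ {in ~: A, forall b, (c <= g b)%O}.
Proof.
case/set0Pn=> a0 a0A sepA.
have [am amA maxA] := arg_maxP g a0A.
by exists (g am); split=> [a /maxA | b /(sepA am)->].
Qed.

Lemma card_swap (T : finType) (A : {set T}) (a b : T) :
  a \in A -> b \notin A -> #|b |: (A :\ a)| = #|A|.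
Proof.
move=> aA bNA; have bNAa : b \notin A :\ a by rewrite in_setD1 (negbTE bNA) andbF.
by rewrite cardsU1 bNAa (cardsD1 a A) aA.
Qed.

Definition kmean (R : realFieldType) (n k : nat) (X : 'I_n -> R) (S : {set 'I_n}) : R :=
  k%:R^-1 * \sum_(i in S) X i.

Section Swap.
Variables (R : realFieldType) (n k : nat) (X : 'I_n -> R) (I : {set 'I_n}).

Let f (x : R) := lift2_dot 1 (- (2 * kmean k X I)) x.

Lemma ssd_swap (i o : 'I_n) : i \in I -> o \notin I ->
  ssd k X (o |: (I :\ i)) =
    ssd k X I + (f (X o) - f (X i)) - k%:R^-1 * (X o - X i) ^+ 2.
Proof.
move=> iI oNI; have oNIi : o \notin I :\ i by rewrite in_setD1 (negbTE oNI) andbF.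
rewrite /f /lift2_dot /kmean /ssd !big_setU1 //= 2!(big_setD1 i iI) /=.
move: (\sum_(j in I :\ i) X j) (\sum_(j in I :\ i) X j ^+ 2) => s q.
move: (k%:R^-1) (X i) (X o) => t xi xo.
ring.
Qed.

Lemma ssd_min_swap_le (i o : 'I_n) :
  #|I| = k -> (forall J : {set 'I_n}, #|J| = k -> ssd k X I <= ssd k X J) ->
  i \in I -> o \notin I -> f (X i) <= f (X o).
Proof.
move=> cardI Imin iI oNI.
have := Imin _ (etrans (card_swap iI oNI) cardI).
rewrite ssd_swap //.
have : 0 <= k%:R^-1 * (X o - X i) ^+ 2 by rewrite mulr_ge0 ?invr_ge0 ?ler0n ?sqr_ge0.
move: (k%:R^-1 * _) (ssd k X I) (f (X i)) (f (X o)) => c s fi fo; lra.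
Qed.

End Swap.

Theorem theorem3 (R : realFieldType) (n k : nat) (X : 'I_n -> R) (I : {set 'I_n}) :
  (1 <= k)%N -> (k <= n)%N -> #|I| = k ->
  (forall J : {set 'I_n}, #|J| = k -> ssd k X I <= ssd k X J) ->
  exists w1 w2 b : R, (w1 != 0 \/ w2 != 0) /\
    (forall i, i \in I -> lift2_dot w1 w2 (X i) <= b) /\
    (forall o, o \in ~: I -> b <= lift2_dot w1 w2 (X o)).
Proof.
move=> k_gt0 _ cardI Imin.
have I_neq0 : I != set0 by rewrite -card_gt0 cardI.
set w2 := - (2 * kmean k X I).
have sepI : {in I & ~: I, forall i o,
    lift2_dot 1 w2 (X i) <= lift2_dot 1 w2 (X o)}.
  by move=> i o iI; rewrite in_setC; exact: ssd_min_swap_le.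
have [b [Ib Ob]] := set_separated_by_max I_neq0 sepI.
by exists 1, w2, b; split; [left; exact: oner_neq0 | split].
Qed.
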